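(* Let $X$ be a compactum and $Z$ a paracompact space such that every compact subspace of $Z$ has finite Lebesgue covering dimension. Let $g\colon Y\to Z$ be a surjective map with the following property: for every $z\in Z$ and every neighborhood $U(z)$ of $z$ in $Z$ there is a neighborhood $V(z)\subset U(z)$ of $z$ such that $g^{-1}(V(z))\in AE(X)$. Then for every open cover $\omega$ of $Z$ and every map $f\colon X\to Z$ there exists a map $\tilde f\colon X\to Y$ such that $f$ and $g\circ\tilde f$ are $\omega$-close (i.e. for every $x\in X$ there is $W\in\omega$ containing both $f(x)$ and $g(\tilde f(x))$).
   Context: All spaces are Tychonoff and all maps continuous; a compactum is a compact Hausdorff space. For spaces $X,Y$, $Y\in AE(X)$ means every map $h\colon A\to Y$ defined on a closed subspace $A\subset X$ extends to a map $X\to Y$. *)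

From mathcomp Require Import all_boot all_order all_algebra.
From mathcomp Require Import all_classical all_reals all_analysis.
Set Implicit Arguments. Unset Strict Implicit. Unset Printing Implicit Defensive.
Local Open Scope classical_set_scope.

Definition tychonoff_sp (T : topologicalType) :=
  completely_regular_space T /\ hausdorff_space T.

Definition compactum_sp (T : topologicalType) :=
  compact [set: T] /\ hausdorff_space T.

Definition open_cover (T : topologicalType) (w : set (set T)) :=
  (forall W, w W -> open W) /\ (forall x : T, exists W, w W /\ W x).

Definition refines (T : Type) (v w : set (set T)) :=
  forall V, v V -> exists W, w W /\ V `<=` W.

Definition locally_finite (T : topologicalType) (v : set (set T)) :=
  forall x : T, exists N, nbhs x N /\ finite_set [set W | v W /\ (N `&` W !=set0)].

(* paracompact: every open cover has a locally finite open refinement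
   (Hausdorffness is part of the standing Tychonoff assumption) *)
Definition paracompact (T : topologicalType) :=
  forall w : set (set T), open_cover w ->
    exists v, open_cover v /\ refines v w /\ locally_finite v.

Definition rel_open (T : topologicalType) (K U : set T) :=
  exists O, open O /\ U = O `&` K.

(* Lebesgue covering dimension of the subspace K is <= n:
   every finite open cover of K has a finite open refinement covering K
   of order <= n+1 (no point of K lies in n+2 distinct members). *)
Definition covering_dim_le (T : topologicalType) (K : set T) (n : nat) :=
  forall w : set (set T), finite_set w -> (forall U, w U -> rel_open K U) ->
    K `<=` \bigcup_(U in w) U ->
    exists v : set (set T), [/\ finite_set v, (forall V, v V -> rel_open K V),
      K `<=` \bigcup_(V in v) V, refines v w &
      forall f : 'I_n.+2 -> set T, injective f -> (forall i, v (f i)) ->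
        ~ (exists x, K x /\ forall i, f i x)].

(* S (a subset of Y, with the subspace topology) is in AE(X):
   every map from a closed subset A of X into S extends to a map X -> S. *)
Definition AE (X Y : topologicalType) (S : set Y) :=
  forall (A : set X), closed A ->
  forall h : X -> Y, {within A, continuous h} -> h @` A `<=` S ->
  exists F : X -> Y, [/\ continuous F, (forall x, S (F x)) &
                         (forall x, A x -> F x = h x)].

From HB Require Import structures.
From mathcomp Require Import all_boot all_order all_algebra.
From mathcomp Require Import all_classical all_reals all_analysis.
From mathcomp Require Import Rstruct finmap.
From mathcomp Require Import lra.
Set Implicit Arguments. Unset Strict Implicit. Unset Printing Implicit Defensive.
Import Order.TTheory GRing.Theory Num.Theory numFieldNormedType.Exports.
Local Open Scope classical_set_scope.
Local Open Scope ring_scope.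

(* Everything happens over the compact image K = f(X), of dimension n say.  Iterating the
   AE-neighbourhood property of g along star refinements of w yields a finite
   open cover B of K and sets E_c(b) (b in B, c <= n+1) such that
   g^-1(E_c(b)) is in AE(X), E_c(b') lies in E_{c+1}(b) whenever b meets b',
   and E_{n+1}(b) lies in a member of w containing b.  Functions phi_i on Z
   subordinate to a refinement of B of order n+1 cut X into closed pieces P_S,
   where the values phi_i(f x) for i in S exceed all others by a fixed gap;
   here 1 <= |S| <= n+1, and distinct pieces with |S| = |S'| are disjoint.
   The lift is built piece by piece in increasing order of |S|, extending over
   P_S into g^-1(E_|S|(b_S)) by the AE property: by the chain condition the
   values already defined on P_S lie in that set. *)

Lemma choice_on (T U : Type) (u0 : U) (P : T -> Prop) (Q : T -> U -> Prop) :
  (forall t, P t -> exists u, Q t u) -> exists f : T -> U, forall t, P t -> Q t (f t).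
Proof.
move=> PQ; suff /choice [f Pf] : forall t, exists u, P t -> Q t u by exists f.
move=> t; have [/PQ [u Qu]|nPt] := pselect (P t); first by exists u.
by exists u0.
Qed.

Lemma card_le_of_no_injection (I : finType) (Q : I -> Prop) n :
  (forall h : 'I_n.+2 -> I, injective h -> ~ forall k, Q (h k)) ->
  forall S : {set I}, {in S, forall i, Q i} -> (#|S| <= n.+1)%N.
Proof.
move=> no_inj S SQ; rewrite leqNgt; apply/negP => S_big.
apply: (no_inj (fun k => enum_val (widen_ord S_big k))).
  by move=> k1 k2 /enum_val_inj /(congr1 val) /= k12; apply: val_inj.
by move=> k; apply: SQ; exact: enum_valP.
Qed.

(* [compact_cover] is stated for pointed spaces; this is [Z] pointed at [z]. *)
Definition pointed_at (Z : topologicalType) (z : Z) : Type := Z.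
HB.instance Definition _ (Z : topologicalType) (z : Z) :=
  Topological.copy (@pointed_at Z z) Z.
HB.instance Definition _ (Z : topologicalType) (z : Z) :=
  isPointed.Build (@pointed_at Z z) z.

Lemma compact_fset_subcover (Z : topologicalType) (K : set Z) (G : Z -> set Z) :
  compact K -> (forall z, K z -> open (G z) /\ G z z) ->
  exists2 D : {fset Z}, [set` D] `<=` K & K `<=` \bigcup_(z in [set` D]) G z.
Proof.
move=> cK oG; have [[k Kk]|K0] := pselect (K !=set0); last first.
  by exists fset0 => // y Ky; exfalso; apply: K0; exists y.
have : compact (K : set (pointed_at k)) := cK.
rewrite compact_cover => /(_ Z K G).
case=> [z /oG []//|y Ky|D DK KD]; first by exists y => //; apply: (oG y Ky).2.
by exists D => // z /DK; rewrite in_setE.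
Qed.

Section RealFunctions.
Variable R : realType.

Lemma continuous_bigmax (T : topologicalType) (J : Type) (r : seq J) (P : pred J)
    (F : J -> T -> R) : (forall j, P j -> continuous (F j)) ->
  continuous (fun y => \big[Num.max/0]_(j <- r | P j) F j y).
Proof.
move=> cF; elim: r => [|j r IH].
  by under eq_fun do rewrite big_nil; exact: cst_continuous.
under eq_fun do rewrite big_cons; case Pj: (P j) => // y.
exact: continuous_max (cF j Pj y) (IH y).
Qed.

Lemma open_lt_continuous (T : topologicalType) (u : T -> R) (c : R) :
  continuous u -> open [set y | u y < c].
Proof.
by move=> cu; apply: (@open_comp _ _ u [set r | r < c]) => [y _|]; [exact: cu|exact: open_lt].
Qed.

Lemma closed_le_continuous (T : topologicalType) (u v : T -> R) :
  continuous u -> continuous v -> closed [set y | u y <= v y].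
Proof.
move=> cu cv; have -> : [set y | u y <= v y] = (v - u) @^-1` [set r | 0 <= r].
  by apply/seteqP; split => y /=; rewrite !fctE subr_ge0.
by apply: preimage_closed => [y _|]; [exact: (continuousB (cv y) (cu y))|exact: closed_ge].
Qed.

Lemma open_urysohn (Z : topologicalType) : completely_regular_space Z ->
  forall (U : set Z) (a : Z), open U -> U a ->
  exists f : Z -> R, [/\ continuous f, f a = 0 & forall z, ~ U z -> f z = 1].
Proof.
move=> crZ U a oU Ua; have : closed (~` U) by rewrite closedC.
move=> /(crZ a) /(_ (fun nUa => nUa Ua)) /(@uniform_separatorP Z R).
case=> f [cf _ f0 f1]; exists f; split => //.
- by apply: f0; exists a.
- by move=> z nUz; apply: f1; exists z.
Qed.

Lemma urysohn_finite_cover (Z : topologicalType) (K : set Z) (U : Z -> set Z) (c : R) :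
  completely_regular_space Z -> compact K -> (forall z, K z -> open (U z) /\ U z z) ->
  0 < c ->
  exists (D : {fset Z}) (psi : Z -> Z -> R), [/\ [set` D] `<=` K,
    (forall p, continuous (psi p)), (forall p y, K p -> ~ U p y -> psi p y = 1) &
    (forall y, K y -> exists2 p, p \in D & psi p y < c)].
Proof.
move=> crZ cK oU c0.
have /choice [psi psiP] : forall z, exists psi : Z -> R,
    continuous psi /\ (K z -> psi z = 0 /\ forall y, ~ U z y -> psi y = 1).
  move=> z; have [/oU [oUz Uzz]|nKz] := pselect (K z); last first.
    by exists (fun=> 0); split => //; exact: cst_continuous.
  by have [psi [? ? ?]] := open_urysohn crZ oUz Uzz; exists psi.
have [|D DK KD] := @compact_fset_subcover Z K (fun z => [set y | psi z y < c]) cK.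
  move=> z Kz; have [cpsi /(_ Kz) [psi0 _]] := psiP z.
  by split; [exact: open_lt_continuous|rewrite /= psi0].
exists D, psi; split => //.
- by move=> p; have [] := psiP p.
- by move=> p y Kp; have [_ /(_ Kp) [_]] := psiP p; apply.
Qed.

Lemma subordinate_functions (Z : topologicalType) (K : set Z) (I : finType)
    (O : I -> set Z) :
  completely_regular_space Z -> compact K -> (forall i, open (O i)) ->
  (forall z, K z -> exists i, O i z) ->
  exists phi : I -> Z -> R, [/\ (forall i, continuous (phi i)),
    (forall i y, 0 < phi i y -> O i y) & forall z, K z -> exists i, 1/2 < phi i z].
Proof.
move=> crZ cK oO covO.
have [[z0 /covO [i0 _]]|K0] := pselect (K !=set0); last first.
  exists (fun _ _ => 0); split => [i|i y|z Kz]; first exact: cst_continuous.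
    by rewrite ltxx.
  by case: K0; exists z.
have /(choice_on i0) [ip ipP] := covO.
have [|D [psi [DK cpsi psi1 Dcov]]] :=
  @urysohn_finite_cover Z K (fun z => O (ip z)) (1/2) crZ cK _ ltac:(lra).
  by move=> z /ipP; split.
exists (fun i y => \big[Num.max/0]_(p <- D | ip p == i) (1 - psi p y)); split.
- move=> i; apply: continuous_bigmax => p _ y.
  by apply: continuousB; [exact: cst_continuous|exact: cpsi].
- move=> i y; rewrite big_seq_cond => phi_pos; apply: contrapT => nO.
  move: phi_pos; rewrite ltNge bigmax_le // => p /andP[pD /eqP ipi].
  by rewrite psi1 ?subrr ?ipi //; exact: DK.
- move=> z /Dcov [p pD psipz]; exists (ip p).
  apply: (@lt_le_trans _ _ (1 - psi p z)); first lra.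
  exact: (@le_bigmax_seq _ _ _ _ _ p).
Qed.

End RealFunctions.

Lemma compact_star_refinement (Z : topologicalType) (K : set Z) (Acal : set (set Z)) :
  completely_regular_space Z -> compact K -> (forall A, Acal A -> open A) ->
  (forall z, K z -> exists2 A, Acal A & A z) ->
  exists Dcal : set (set Z), [/\ (forall D, Dcal D -> open D),
    (forall z, K z -> exists2 D, Dcal D & D z) &
    (forall D, Dcal D -> exists A, Acal A /\
       forall D', Dcal D' -> D `&` D' !=set0 -> D' `<=` A)].
Proof.
move=> crZ cK oA covA.
have /(choice_on set0) [a aP] : forall z, K z -> exists A, Acal A /\ A z.
  by move=> z /covA [A AA Az]; exists A.
have [|D [psi [DK cpsi psi1 Dcov]]] :=
  @urysohn_finite_cover Rdefinitions.R Z K a (1/3) crZ cK _ ltac:(lra).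
  by move=> z Kz; have [/oA oaz azz] := aP z Kz.
(* Two [dist]-balls of radius 1/6 that meet are within 1/2 of each other in
   every coordinate [psi p]; so if [psi p x < 1/3], the star of the ball around
   [x] stays where [psi p < 1], that is inside [a p]. *)
pose dist x y := \big[Num.max/0]_(p <- D) `|psi p x - psi p y|.
have dist_ge p x y : p \in D -> `|psi p x - psi p y| <= dist x y.
  by move=> pD; apply: (@le_bigmax_seq _ _ _ _ _ p).
exists [set [set y | dist x y < 1/6] | x in K]; split.
- move=> _ [x Kx <-]; apply: open_lt_continuous; apply: continuous_bigmax => p _ y.
  by apply: cvg_norm; apply: cvgB; [exact: cvg_cst|exact: cpsi].
- move=> x Kx; exists [set y | dist x y < 1/6]; first by exists x.
  apply: (@le_lt_trans _ _ 0); last lra.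
  by apply: bigmax_le => // p _; rewrite subrr normr0.
- move=> _ [x Kx <-]; have [p pD psipx] := Dcov x Kx; have Kp := DK p pD.
  exists (a p); split; first exact: (aP p Kp).1.
  move=> _ [x' Kx' <-] [q [/= qx qx']] y /= yx'; apply: contrapT => nay.
  have := psi1 p y Kp nay.
  move: (le_lt_trans (dist_ge p _ _ pD) qx) (le_lt_trans (dist_ge p _ _ pD) qx').
  move: (le_lt_trans (dist_ge p _ _ pD) yx').
  rewrite !ltr_norml; lra.
Qed.

Lemma covering_dim_functions (R : realType) (Z : topologicalType) (K : set Z) n
    (w0 : set (set Z)) :
  completely_regular_space Z -> compact K -> covering_dim_le K n -> finite_set w0 ->
  (forall b, w0 b -> open b) -> (forall z, K z -> exists2 b, w0 b & b z) ->
  exists (I : finType) (phi : I -> Z -> R) (b : I -> set Z),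
    [/\ (forall i, w0 (b i)), (forall i, continuous (phi i)),
      (forall i z, K z -> 0 < phi i z -> b i z),
      (forall z, K z -> exists i, 1/2 < phi i z) &
      (forall z (S : {set I}), K z -> {in S, forall i, 0 < phi i z} -> (#|S| <= n.+1)%N)].
Proof.
move=> crZ cK dimK w0_fin ow0 covw0.
have [|b w0b|z Kz|v [v_fin v_open v_cov v_ref v_ord]] := dimK [set b `&` K | b in w0].
- exact: finite_image.
- by case: w0b => b' /ow0 ob' <-; exists b'.
- by have [b w0b bz] := covw0 z Kz; exists (b `&` K) => //; exists b.
have [V vV] := (finite_fsetP).1 v_fin.
have vV_in (i : V) : v (val i) by rewrite vV; exact: fsvalP.
have /choice [Op OpP] : forall i : V, exists U, open U /\ val i = U `&` K.
  by move=> i; have [U [oU ->]] := v_open _ (vV_in i); exists U.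
have /choice [b bP] : forall i : V, exists b, w0 b /\ val i `<=` b.
  move=> i; have [_ [[b w0b <-] sub]] := v_ref _ (vV_in i).
  by exists b; split => // z /sub [].
have [||phi [cphi phiO phi_big]] := @subordinate_functions R Z K V Op crZ cK.
- by move=> i; have [] := OpP i.
- move=> z Kz; have [Vz vVz Vzz] := v_cov z Kz.
  have VzV : Vz \in V by move: vVz; rewrite vV.
  exists [` VzV]%fset; have [_ eqVz] := OpP [` VzV]%fset.
  by have : val [` VzV]%fset z := Vzz; rewrite eqVz => -[].
exists V, phi, b; split => //.
- by move=> i; have [] := bP i.
- move=> i z Kz /phiO Oiz; have [_ sub] := bP i; apply: sub.
  by have [_ ->] := OpP i.
- move=> z S Kz; apply: card_le_of_no_injection => h h_inj h_pos.
  apply: (v_ord (fun k => val (h k))) => [k1 k2 /val_inj /h_inj //|k|].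
    exact: vV_in.
  exists z; split => // k; have [_ ->] := OpP (h k); split => //; exact: phiO.
Qed.

Section GapSets.
Variables (R : realType) (I : finType) (v : I -> R) (n : nat) (e : R).
Hypothesis e_gt0 : 0 < e.

Definition gap_set (S : {set I}) :=
  {in S, forall i, e <= v i} /\ forall i j, i \in S -> j \notin S -> v j + e <= v i.

Lemma gap_set_unique S S' : gap_set S -> gap_set S' -> #|S| = #|S'| -> S = S'.
Proof.
move=> [_ gapS] [_ gapS'] cardSS'; apply/eqP; apply: contraT => neqSS'.
have [i iS iS'] : exists2 i, i \in S & i \notin S'.
  by apply/subsetPn; apply: contraNN neqSS' => sub; rewrite eqEcard sub cardSS' leqnn.
have [j jS' jS] : exists2 j, j \in S' & j \notin S.
  apply/subsetPn; apply: contraNN neqSS' => sub.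
  by rewrite eq_sym eqEcard sub cardSS' leqnn.
move: e_gt0 (gapS i j iS jS) (gapS' j i jS' iS'); clear cardSS'; lra.
Qed.

Hypothesis v_card : forall S : {set I}, {in S, forall i, 0 < v i} -> (#|S| <= n.+1)%N.

Lemma empty_level : exists k : 'I_n.+2, forall i, ~ (k%:R * e < v i <= k.+1%:R * e).
Proof.
(* Otherwise n+2 distinct indices, one per level, would be positive at once. *)
apply: contrapT => no_empty.
have /choice [h hP] : forall k : 'I_n.+2, exists i, k%:R * e < v i <= k.+1%:R * e.
  move=> k; apply: contrapT => nk; apply: no_empty; exists k => i ik.
  by apply: nk; exists i.
have h_inj : injective h.
  move=> k1 k2 hk; apply/val_inj/eqP; rewrite eqn_leq.
  have := hP k1; have := hP k2; rewrite hk => /andP[a1 a2] /andP[b1 b2].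
  by apply/andP; split; rewrite -ltnS -(ltr_nat R) -(ltr_pM2r e_gt0);
    [exact: lt_le_trans b1 a2|exact: lt_le_trans a1 b2].
suff : (#|[set h k | k : 'I_n.+2]| <= n.+1)%N by rewrite card_imset // card_ord ltnn.
apply: v_card => _ /imsetP [k _ ->]; have /andP[+ _] := hP k; apply: le_lt_trans.
by rewrite mulr_ge0 // ltW.
Qed.

Lemma exists_gap_set : (exists i, n.+2%:R * e < v i) ->
  exists S, gap_set S /\ (0 < #|S| <= n.+1)%N.
Proof.
move=> [i0 vi0]; have e_ge0 := ltW e_gt0; have [k k_empty] := empty_level.
have ke_ge0 : 0 <= k%:R * e by rewrite mulr_ge0.
have kSe : k.+1%:R * e = k%:R * e + e by rewrite -natr1 mulrDl mul1r.
pose S := [set i | k.+1%:R * e < v i]%SET.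
have S_pos : {in S, forall i, 0 < v i}.
  by move=> i; rewrite inE; apply: le_lt_trans; rewrite kSe; lra.
exists S; split; first split.
- by move=> i; rewrite inE kSe; lra.
- move=> i j; rewrite !inE -leNgt => vi vj.
  have := k_empty j; rewrite vj andbT => /negP; rewrite -leNgt => vjk.
  by rewrite kSe in vi; lra.
rewrite v_card // andbT; apply/card_gt0P; exists i0; rewrite inE.
apply: le_lt_trans vi0; apply: ler_wpM2r; first exact: ltW.
by rewrite ler_nat ltn_ord.
Qed.

End GapSets.

Section GapPieces.
Variables (R : realType) (X Z : topologicalType) (I : finType).
Variables (phi : I -> Z -> R) (f : X -> Z) (e : R).

Definition gap_piece (S : {set I}) : set X := [set x | gap_set (phi^~ (f x)) e S].

Lemma closed_gap_piece S : continuous f -> (forall i, continuous (phi i)) ->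
  closed (gap_piece S).
Proof.
move=> cf cphi; have cphif i : continuous (phi i \o f).
  by move=> x; apply: continuous_comp; [exact: cf|exact: cphi].
have -> : gap_piece S = \bigcap_(i in [set i | i \in S])
    ([set x | e <= phi i (f x)] `&`
     \bigcap_(j in [set j | j \notin S]) [set x | phi j (f x) + e <= phi i (f x)]).
  apply/seteqP; split => x.
    by move=> [ge gap] i iS; split => [|j jS]; [exact: ge|exact: gap].
  by move=> H; split => [i iS|i j iS jS]; have [? H'] := H i iS; [|exact: H'].
apply: closed_bigI => i _; apply: closedI.
  apply: (closed_le_continuous (u := fun=> e) (v := phi i \o f)) => //.
  by move=> x; exact: cst_continuous.
apply: closed_bigI => j _.
apply: (closed_le_continuous (u := fun x => phi j (f x) + e) (v := phi i \o f)) => //.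
by move=> x; apply: continuousD; [exact: cphif|exact: cst_continuous].
Qed.

End GapPieces.

Section AETower.
Variables (X Y Z : topologicalType) (g : Y -> Z).

Record AE_tower (K : set Z) (Acal : set (set Z)) (k : nat)
    (B : set (set Z)) (E : nat -> set Z -> set Z) : Prop := {
  tower_finite : finite_set B;
  tower_open : forall b, B b -> open b;
  tower_cover : forall z, K z -> exists2 b, B b & b z;
  tower_AE : forall b c, B b -> (c < k)%N -> AE X (g @^-1` (E c b));
  tower_chain : forall b b' c, B b -> B b' -> b `&` b' !=set0 -> (c.+1 < k)%N ->
    E c b' `<=` E c.+1 b;
  tower_top : forall b, B b ->
    exists A, [/\ Acal A, b `<=` A & (0 < k)%N -> E k.-1 b `<=` A] }.

Lemma AE_tower_mono K Acal k B E : AE_tower K Acal k B E ->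
  forall b b' c' c, B b -> B b' -> b `&` b' !=set0 -> (c' < c < k)%N ->
  E c' b' `<=` E c b.
Proof.
case=> _ _ _ _ chainE _ b b' c' + Bb Bb' bb'; elim=> // c IH /andP[].
rewrite ltnS leq_eqVlt => /orP[/eqP <-|c'c] ck; first exact: chainE.
have [y [b_y _]] := bb'.
by move=> z /IH; rewrite c'c (ltnW ck) => /(_ isT); apply: chainE => //; exists y.
Qed.

Lemma AE_tower0 K Acal : compact K -> (forall A, Acal A -> open A) ->
  (forall z, K z -> exists2 A, Acal A & A z) ->
  exists B E, AE_tower K Acal 0 B E.
Proof.
move=> cK oA covA.
have /(choice_on set0) [a aP] : forall z, K z -> exists A, Acal A /\ A z.
  by move=> z /covA [A AA Az]; exists A.
have [|D DK KD] := @compact_fset_subcover Z K a cK.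
  by move=> z /aP [/oA].
exists (a @` [set` D]), (fun _ _ => set0); split => //.
- exact/finite_image/finite_fset.
- by move=> _ [z /DK/aP [/oA oaz _] <-].
- by move=> z /KD [p pD apz]; exists (a p) => //; exists p.
- by move=> _ [z /DK/aP [Aaz _] <-]; exists (a z); split.
Qed.

Lemma AE_towerS K Acal Dcal k B E :
  (forall D, Dcal D -> exists V, [/\ AE X (g @^-1` V), (exists2 A, Acal A & V `<=` A) &
     forall D', Dcal D' -> D `&` D' !=set0 -> D' `<=` V]) ->
  AE_tower K Dcal k B E -> exists E', AE_tower K Acal k.+1 B E'.
Proof.
move=> /(choice_on set0) [V VP] [Bfin oB covB AEE chainE topE].
have /(choice_on set0) [D DP] := topE.
have bV b : B b -> b `<=` V (D b).
  move=> Bb y b_y; have [DD bD _] := DP b Bb; have [_ _ starV] := VP _ DD.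
  by apply: (starV _ DD); [exists y; split; apply: bD|apply: bD].
(* The new top level of [b] is [V (D b)], which absorbs the star of [D b] and
   hence the old top level of every [b'] meeting [b]. *)
exists (fun c b => if c == k then V (D b) else E c b); split => //.
- move=> b c Bb; rewrite ltnS leq_eqVlt => /orP[/eqP ->|ck].
    by rewrite eqxx; have [DD _ _] := DP b Bb; have [] := VP _ DD.
  by rewrite (ltn_eqF ck); apply: AEE.
- move=> b b' c Bb Bb' [z [bz b'z]]; rewrite ltnS => ck; rewrite (ltn_eqF ck).
  case: eqP => [ck'|/eqP ck']; last first.
    by apply: chainE => //; [exists z|rewrite ltn_neqAle ck' ck].
  move: DP; rewrite -ck' /= => DP.
  have [DD bD _] := DP b Bb; have [DD' b'D /(_ isT) ED'] := DP b' Bb'.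
  move=> y /ED' D'y; have [_ _ starV] := VP _ DD.
  by apply: (starV _ DD') => //; exists z; split; [apply: bD|apply: b'D].
- move=> b Bb; have [DD _ _] := DP b Bb; have [_ [A AA VA] _] := VP _ DD.
  by exists A; split => // [y /(bV b Bb) /VA //|_]; rewrite eqxx.
Qed.

Lemma exists_AE_tower K k : completely_regular_space Z -> compact K ->
  (forall (z : Z) (U : set Z), open U -> U z ->
     exists V : set Z, [/\ open V, V z, V `<=` U & AE X (g @^-1` V)]) ->
  forall Acal, (forall A, Acal A -> open A) ->
  (forall z, K z -> exists2 A, Acal A & A z) ->
  exists B E, AE_tower K Acal k B E.
Proof.
move=> crZ cK AEg; elim: k => [|k IH] Acal oA covA; first exact: AE_tower0.
pose Vcal := [set V | [/\ open V, AE X (g @^-1` V) & exists2 A, Acal A & V `<=` A]].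
have [|z Kz|Dcal [oD covD starD]] := @compact_star_refinement Z K Vcal crZ cK.
- by move=> V [].
- have [A AA Az] := covA z Kz; have [V [oV Vz VA AEV]] := AEg z A (oA A AA) Az.
  by exists V => //; split => //; exists A.
have [B [E towE]] := IH Dcal oD covD.
have [|E' towE'] := AE_towerS (Acal := Acal) _ towE; last by exists B, E'.
by move=> D /starD [V [[_ AEV VA] starV]]; exists V.
Qed.

End AETower.

Section PiecewiseExtension.
Variables (X Y Z : topologicalType) (g : Y -> Z) (J : choiceType) (rank : J -> nat).
Variables (D : set J) (P : J -> set X) (T : J -> set Z) (y0 : Y).
Hypothesis closed_piece : forall j, closed (P j).
Hypothesis piece_rank_inj : forall j j' x, D j -> D j' -> rank j = rank j' ->
  P j x -> P j' x -> j = j'.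
Hypothesis AE_target : forall j, D j -> AE X (g @^-1` T j).
Hypothesis target_mono : forall j j' x, D j -> D j' -> (rank j' < rank j)%N ->
  P j x -> P j' x -> T j' `<=` T j.

Definition pieces (t : seq J) : set X := \bigcup_(j in [set` t]) P j.

Lemma pieces_cons j t : pieces (j :: t) = P j `|` pieces t.
Proof. by rewrite /pieces !bigcup_seq big_cons. Qed.

Lemma closed_pieces t : closed (pieces t).
Proof. by rewrite /pieces bigcup_seq; apply: closed_bigsetU. Qed.

Lemma piecewise_extension t : pairwise (fun j j' => rank j' <= rank j)%N t ->
  (forall j, j \in t -> D j) ->
  exists F : X -> Y, {within pieces t, continuous F} /\
    forall x, pieces t x -> exists2 j, j \in t & P j x /\ T j (g (F x)).
Proof.
elim: t => [|j t IH].
  move=> _ _; exists (fun=> y0); split => [|x [j]] //.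
  by rewrite continuous_subspace_in => x; rewrite in_setE => -[j].
rewrite pairwise_cons => /andP[j_top t_sorted] tD.
have [|F [cF FT]] := IH t_sorted.
  by move=> j' j't; apply: tD; rewrite in_cons j't orbT.
have Dj : D j by apply: tD; rewrite mem_head.
have FT_j : F @` (pieces t `&` P j) `<=` g @^-1` T j.
  move=> _ [x [tx jx] <-]; have [j' j't [j'x Tj']] := FT x tx.
  have Dj' : D j' by apply: tD; rewrite in_cons j't orbT.
  have : (rank j' <= rank j)%N by exact: (allP j_top).
  rewrite leq_eqVlt => /orP[/eqP rjj'|rjj'].
    by rewrite -(piece_rank_inj Dj' Dj rjj' j'x jx).
  exact: target_mono Dj Dj' rjj' jx j'x _ Tj'.
have [G [cG GT GF]] := AE_target Dj (closedI (@closed_pieces t) (@closed_piece j))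
  (continuous_subspaceW (@subIsetl _ _ _) cF) FT_j.
pose F' x := if pselect (pieces t x) is left _ then F x else G x.
exists F'; split.
  rewrite pieces_cons.
  apply: withinU_continuous; [exact: closed_piece|exact: closed_pieces| |].
    apply: (subspace_eq_continuous (f := G)) => [x|]; last exact: continuous_subspaceT.
    rewrite in_setE => jx; change (G x = F' x); rewrite /F'.
    by case: (pselect (pieces t x)) => // tx; apply: GF.
  apply: (subspace_eq_continuous (f := F)) => [x|//].
  rewrite in_setE => tx; change (F x = F' x); rewrite /F'.
  by case: (pselect (pieces t x)).
move=> x; rewrite pieces_cons /F'; case: (pselect (pieces t x)) => [tx _|ntx [jx|//]].
  by have [j' j't j'x] := FT x tx; exists j' => //; rewrite in_cons j't orbT.
by exists j; [rewrite mem_head|split => //; exact: GT].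
Qed.

End PiecewiseExtension.

Section Lifting.
Variables (R : realType) (X Y Z : topologicalType) (g : Y -> Z) (f : X -> Z).
Variables (K : set Z) (w : set (set Z)) (n : nat).
Variables (B : set (set Z)) (E : nat -> set Z -> set Z).
Variables (I : finType) (phi : I -> Z -> R) (b : I -> set Z) (e : R).
Hypothesis fK : forall x, K (f x).
Hypothesis tower : AE_tower X g K w n.+2 B E.
Hypothesis B_b : forall i, B (b i).
Hypothesis phi_pos : forall i z, K z -> 0 < phi i z -> b i z.
Hypothesis phi_big : forall z, K z -> exists i, 1/2 < phi i z.
Hypothesis phi_card : forall z (S : {set I}), K z -> {in S, forall i, 0 < phi i z} ->
  (#|S| <= n.+1)%N.
Hypothesis e_gt0 : 0 < e.
Hypothesis e_small : n.+2%:R * e < 1/2.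

(* Junk value [set0] for an empty [S]. *)
Definition piece_base (S : {set I}) : set Z :=
  if [pick i in S] is Some i then b i else set0.

Definition piece_target (S : {set I}) : set Z := E #|S| (piece_base S).

Lemma piece_base_in (S : {set I}) : (0 < #|S|)%N -> B (piece_base S).
Proof.
rewrite /piece_base; case: pickP => [i _ //|S0].
by rewrite lt0n cards_eq0 => /set0Pn [i]; rewrite S0.
Qed.

Lemma piece_base_gap (S : {set I}) (x : X) : (0 < #|S|)%N -> gap_piece phi f e S x ->
  piece_base S (f x).
Proof.
rewrite /piece_base; case: pickP => [i iS _ [/(_ i iS) ei _]|S0]; last first.
  by rewrite lt0n cards_eq0 => /set0Pn [i]; rewrite S0.
by apply: phi_pos (fK x) _; exact: lt_le_trans ei.
Qed.

Lemma exists_gap_piece x : exists S, gap_piece phi f e S x /\ (0 < #|S| <= n.+1)%N.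
Proof.
apply: exists_gap_set => //; first by move=> S; exact: phi_card.
by have [i phii] := phi_big (fK x); exists i; exact: lt_trans phii.
Qed.

Lemma piece_target_mono (S S' : {set I}) (x : X) : (0 < #|S'|)%N ->
  (#|S'| < #|S| <= n.+1)%N -> gap_piece phi f e S x -> gap_piece phi f e S' x ->
  piece_target S' `<=` piece_target S.
Proof.
move=> S'0 /andP[S'S Sn] PSx PS'x; have S0 := ltn_trans S'0 S'S.
apply: (AE_tower_mono tower (piece_base_in S0) (piece_base_in S'0)).
  by exists (f x); split; exact: piece_base_gap.
by rewrite S'S ltnS.
Qed.

Lemma piece_target_cover (S : {set I}) (x : X) : (0 < #|S| <= n.+1)%N ->
  gap_piece phi f e S x -> exists W, [/\ w W, W (f x) & piece_target S `<=` W].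
Proof.
move=> /andP[S0 Sn] PSx; have Sfx := piece_base_gap S0 PSx.
have [W [wW SW /(_ isT) EW]] := tower_top tower (piece_base_in S0).
exists W; split => //; first exact: SW.
move=> z; rewrite /piece_target.
move: Sn; rewrite leq_eqVlt => /orP[/eqP -> /EW //|Sn].
move=> /(AE_tower_mono tower (piece_base_in S0) (piece_base_in S0)) Ez; apply: EW.
by apply: Ez; [exists (f x)|rewrite Sn ltnSn].
Qed.

Hypothesis cf : continuous f.
Hypothesis cphi : forall i, continuous (phi i).

Lemma lift_from_tower (y0 : Y) :
  exists F : X -> Y, continuous F /\ forall x, exists W, [/\ w W, W (f x) & W (g (F x))].
Proof.
pose r := sort (fun S S' : {set I} => #|S'| <= #|S|)%N
  [seq S : {set I} <- enum {: {set I}} | (0 < #|S| <= n.+1)%N].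
have r_D S : (S \in r) = (0 < #|S| <= n.+1)%N.
  by rewrite mem_sort mem_filter mem_enum andbT.
have [||||||F [cF FT]] := @piecewise_extension X Y Z g _ (fun S : {set I} => #|S|)
  [set S | (0 < #|S| <= n.+1)%N] (gap_piece phi f e) piece_target y0 _ _ _ _ r.
- by move=> S; exact: closed_gap_piece.
- by move=> S S' x _ _ /= cardSS' PSx PS'x; exact: (gap_set_unique e_gt0 PSx PS'x cardSS').
- by move=> S /andP[S0 Sn]; apply: (tower_AE tower (piece_base_in S0)); rewrite ltnS.
- move=> S S' x /andP[_ Sn] /andP[S'0 _] S'S PSx PS'x.
  by apply: piece_target_mono PSx PS'x; rewrite ?S'S.
- rewrite -sorted_pairwise; first by apply: sort_sorted => S S'; exact: leq_total.
  by move=> S1 S2 S3 h12 h23; exact: leq_trans h23 h12.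
- by move=> S; rewrite r_D.
have r_cover : pieces (gap_piece phi f e) r = [set: X].
  apply/seteqP; split => // x _; have [S [PSx DS]] := exists_gap_piece x.
  by exists S => //; rewrite /= r_D.
exists F; split; first by apply/continuous_subspace_setT; rewrite -r_cover.
move=> x; have [|S + [PSx TSx]] := FT x; first by rewrite r_cover.
rewrite r_D => DS; have [W [wW Wfx TW]] := piece_target_cover DS PSx.
by exists W; split => //; exact: TW.
Qed.

End Lifting.

Lemma approximate_lift (X Y Z : topologicalType) (g : Y -> Z) :
  compact [set: X] -> completely_regular_space Z ->
  (forall K : set Z, compact K -> exists n : nat, covering_dim_le K n) ->
  (forall z : Z, exists y : Y, g y = z) ->
  (forall (z : Z) (U : set Z), open U -> U z ->
     exists V : set Z, [/\ open V, V z, V `<=` U & AE X (g @^-1` V)]) ->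
  forall w : set (set Z), open_cover w ->
  forall f : X -> Z, continuous f ->
  exists ft : X -> Y, continuous ft /\
    (forall x : X, exists W, [/\ w W, W (f x) & W (g (ft x))]).
Proof.
move=> cX crZ dimZ g_surj AEg w [ow covw] f cf.
have [[x0 _]|X0] := pselect ([set: X] !=set0); last first.
  exists (fun x => False_rect _ (X0 (ex_intro _ x I))).
  by split => x; case: X0; exists x.
have [y0 _] := g_surj (f x0).
have cK : compact (range f) by apply: continuous_compact => //; exact: continuous_subspaceT.
have [n dimK] := dimZ _ cK.
have [|B [E tower]] := @exists_AE_tower X Y Z g _ n.+2 crZ cK AEg w ow.
  by move=> z _; have [W [wW Wz]] := covw z; exists W.
have [I [phi [b [B_b cphi phi_pos phi_big phi_card]]]] :=
  @covering_dim_functions Rdefinitions.R Z _ n B crZ cK dimK (tower_finite tower)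
    (tower_open tower) (tower_cover tower).
have [e e_gt0 e_small] : exists2 e : Rdefinitions.R, 0 < e & n.+2%:R * e < 1/2.
  exists ((n.+2%:R)^-1 / 4); first by rewrite divr_gt0 ?invr_gt0 ?ltr0n.
  by rewrite mulrA mulfV ?pnatr_eq0 //; lra.
have fK x : range f (f x) by exists x.
exact: lift_from_tower fK tower B_b phi_pos phi_big phi_card e_gt0 e_small cf cphi y0.
Qed.

Theorem lemma3p3 (X Y Z : topologicalType) (g : Y -> Z) :
  compactum_sp X -> tychonoff_sp X -> tychonoff_sp Y -> tychonoff_sp Z ->
  paracompact Z ->
  (forall K : set Z, compact K -> exists n : nat, covering_dim_le K n) ->
  continuous g -> (forall z : Z, exists y : Y, g y = z) ->
  (forall (z : Z) (U : set Z), open U -> U z ->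
     exists V : set Z, [/\ open V, V z, V `<=` U & AE X (g @^-1` V)]) ->
  forall w : set (set Z), open_cover w ->
  forall f : X -> Z, continuous f ->
  exists ft : X -> Y, continuous ft /\
    (forall x : X, exists W, [/\ w W, W (f x) & W (g (ft x))]).
Proof.
move=> [cX _] _ _ [crZ _] _ dimZ _ g_surj AEg.
exact: approximate_lift.
Qed.
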